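(* Let $G=(V,E)$ be a graph with $m\ge1$ edges and no isolated vertices. Then the in-degree distribution of any biased orientation of $G$ is an optimal solution of the linear program $$\min\ \sum_{v\in V} -p_v\log\frac{\deg(v)}{m}\quad\text{subject to } p\in P(G),$$ and the optimum value of this linear program is at most $\mathrm{OPT}(G)$.
   Context: All graphs are finite, undirected and loopless, multiple edges allowed. For $S\subseteq V$, $e(S)$ is the fraction of edges of $G$ incident to at least one vertex of $S$, and $p(S):=\sum_{v\in S}p_v$. $P(G):=\{p\in\mathbb{R}^V : p(S)\le e(S)\ \forall S\subseteq V,\ p(V)=1\}$. For an orientation $\vec G$, the in-degree distribution is $p_v:=\rho_{\vec G}(v)/m$ with $\rho_{\vec G}(v)$ the in-degree of $v$. Entropy $H(p):=\sum_v -p_v\log p_v$ ($\log$ base $2$, $-0\log0:=0$); $\mathrm{OPT}(G)$ is the minimum entropy of the in-degree distribution of an orientation of $G$. An orientation is biased if each edge $vw$ with $\deg(v)>\deg(w)$ is oriented toward $v$. *)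

From mathcomp Require Import all_boot.
From Stdlib Require Import Reals.

Set Implicit Arguments.
Unset Strict Implicit.
Unset Printing Implicit Defensive.

(* A finite loopless multigraph: vertex type V, edge type E (each element of E is
   one edge, so parallel edges are allowed), endpoints ends e = (u, w). *)

Definition loopless (V E : finType) (ends : E -> V * V) : Prop :=
  forall e : E, (ends e).1 <> (ends e).2.

Definition incident (V E : finType) (ends : E -> V * V) (v : V) (e : E) : bool :=
  (v == (ends e).1) || (v == (ends e).2).

(* degree of v (graph is loopless, so this is the usual degree) *)
Definition deg (V E : finType) (ends : E -> V * V) (v : V) : nat :=
  #|[set e : E | incident ends v e]|.

Definition nedges (E : finType) : nat := #|E|.

Local Open Scope R_scope.

Definition log2 (x : R) : R := ln x / ln 2.

Notation "\rsum_ ( i 'in' A ) F" := (\big[Rplus/0%R]_(i in A) F)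
  (at level 41, F at level 41, i, A at level 50) : R_scope.
Notation "\rsum_ ( i : T ) F" := (\big[Rplus/0%R]_(i : T) F)
  (at level 41, F at level 41, i at level 50) : R_scope.

Definition frac_edges (V E : finType) (ends : E -> V * V) (S : {set V}) : R :=
  INR #|[set e : E | ((ends e).1 \in S) || ((ends e).2 \in S)]| / INR (nedges E).

Definition pS (V : finType) (p : V -> R) (S : {set V}) : R := \rsum_(v in S) p v.

Definition inP (V E : finType) (ends : E -> V * V) (p : V -> R) : Prop :=
  (forall S : {set V}, pS p S <= frac_edges ends S) /\ pS p [set: V] = 1.

(* An orientation: o e = true means e is oriented towards (ends e).1,
   o e = false means towards (ends e).2. *)
Definition head (V E : finType) (ends : E -> V * V) (o : E -> bool) (e : E) : V :=
  if o e then (ends e).1 else (ends e).2.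

Definition indeg (V E : finType) (ends : E -> V * V) (o : E -> bool) (v : V) : nat :=
  #|[set e : E | head ends o e == v]|.

Definition indeg_dist (V E : finType) (ends : E -> V * V) (o : E -> bool) (v : V) : R :=
  INR (indeg ends o v) / INR (nedges E).

Definition biased (V E : finType) (ends : E -> V * V) (o : E -> bool) : Prop :=
  forall e : E,
    (ltn (deg ends (ends e).2) (deg ends (ends e).1) -> head ends o e = (ends e).1) /\
    (ltn (deg ends (ends e).1) (deg ends (ends e).2) -> head ends o e = (ends e).2).

Definition negxlogx (x : R) : R := if Req_EM_T x 0 then 0 else - (x * log2 x).

Definition entropy (V : finType) (p : V -> R) : R := \rsum_(v : V) negxlogx (p v).

Definition OPT (V E : finType) (ends : E -> V * V) : R :=
  \big[Rmin/entropy (indeg_dist ends (fun _ => true))]_(o : {ffun E -> bool})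
     entropy (indeg_dist ends o).

Definition lp_obj (V E : finType) (ends : E -> V * V) (p : V -> R) : R :=
  \rsum_(v : V) (- (p v * log2 (INR (deg ends v) / INR (nedges E)))).

From HB Require Import structures.
From Pilot Require Import Defs.
From mathcomp Require Import all_boot.
From Stdlib Require Import Reals Lra Lia.

Set Implicit Arguments.
Unset Strict Implicit.

Local Open Scope R_scope.

(* Write m for the number of edges and L_t = {v | deg v >= t} for the
   degree level sets.  The proof rests on a layer-cake formula: for every
   distribution q of total mass 1 (and no isolated vertices)
     lp_obj q = - log2 (1/m) - sum_(k < m) gap_k * q(L_(k+2)),
   where gap_k = log2 ((k+2)/m) - log2 ((k+1)/m) >= 0.  Minimising the LP
   over P(G) thus amounts to maximising every q(L_t), which P(G) bounds by
   e(L_t).  For a biased orientation an edge with an endpoint in L_t points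
   into L_t, so its in-degree distribution attains q(L_t) = e(L_t) for all t
   at once, hence is optimal.  Finally, since every in-degree is at most the
   degree, lp_obj of any in-degree distribution is at most its entropy; so the
   LP optimum is below the entropy of every orientation, hence below OPT(G). *)

HB.instance Definition _ :=
  Monoid.isComLaw.Build R 0 Rplus
    (fun a b c => esym (Rplus_assoc a b c)) Rplus_comm Rplus_0_l.

Lemma rsum_lin (I : finType) (P : pred I) (F G : I -> R) (a b : R) :
  \big[Rplus/0]_(i | P i) (a * F i + b * G i) =
  a * \big[Rplus/0]_(i | P i) F i + b * \big[Rplus/0]_(i | P i) G i.
Proof.
apply: (big_ind3 (fun x y z => x = a * y + b * z)) => //; first by ring.
by move=> x1 y1 z1 x2 y2 z2 -> ->; ring.
Qed.

Lemma rsum_le (I : finType) (P : pred I) (F G : I -> R) :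
  (forall i, P i -> F i <= G i) ->
  \big[Rplus/0]_(i | P i) F i <= \big[Rplus/0]_(i | P i) G i.
Proof. by move=> FG; apply: (big_ind2 Rle) => //; [lra | move=> *; lra]. Qed.

Lemma INR_sum (I : finType) (P : pred I) (f : I -> nat) :
  INR (\sum_(i | P i) f i) = \big[Rplus/0]_(i | P i) INR (f i).
Proof. exact: (big_morph INR plus_INR). Qed.

Lemma log2_le (a b : R) : 0 < a -> a <= b -> log2 a <= log2 b.
Proof.
move=> a_gt0 ab; rewrite /log2 /Rdiv.
have ln2_gt0 : 0 < ln 2 by rewrite -ln_1; apply: ln_increasing; lra.
apply: Rmult_le_compat_r; first by apply/Rlt_le/Rinv_0_lt_compat.
by case: (Rle_lt_or_eq_dec _ _ ab) => [/(ln_increasing _ _ a_gt0)/Rlt_le | <-]; lra.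
Qed.

Section Graph.

Variables (V E : finType) (ends : E -> V * V).

Local Notation m := (INR (nedges E)).

Lemma nedges_gt0 : (0 < nedges E)%nat -> 0 < m.
Proof. by move=> m_gt0; apply/lt_0_INR/ltP. Qed.

Lemma pS_indeg_dist (o : E -> bool) (S : {set V}) :
  pS (indeg_dist ends o) S = INR #|[set e | Defs.head ends o e \in S]| / m.
Proof.
have heads : \sum_(v in S) indeg ends o v = #|[set e | Defs.head ends o e \in S]|.
  rewrite -sum1_card (partition_big (Defs.head ends o) (mem S)) /=; last first.
    by move=> e; rewrite inE.
  apply: eq_bigr => v vS; rewrite /indeg -sum1_card; apply: eq_bigl => e.
  by rewrite !inE; case: eqP => [->|_]; rewrite ?vS ?andbF ?andbT.
rewrite /pS /indeg_dist -heads INR_sum /Rdiv.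
have := @rsum_lin _ (fun v => v \in S) (fun v => INR (indeg ends o v))
  (fun v => INR (indeg ends o v)) (/ m) 0.
under eq_bigr do rewrite Rmult_0_l Rplus_0_r Rmult_comm.
by move=> ->; ring.
Qed.

Lemma indeg_dist_inP (o : E -> bool) :
  (0 < nedges E)%nat -> inP ends (indeg_dist ends o).
Proof.
move=> /nedges_gt0 m_gt0; split=> [S|]; rewrite pS_indeg_dist.
- rewrite /frac_edges /Rdiv; apply: Rmult_le_compat_r.
    by apply/Rlt_le/Rinv_0_lt_compat.
  apply/le_INR/leP/subset_leq_card/subsetP => e.
  by rewrite !inE /Defs.head; case: (o e) => ->; rewrite ?orbT.
- have -> : #|[set e | Defs.head ends o e \in [set: V]]| = nedges E.
    by apply: eq_card => e; rewrite !inE.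
  by field; lra.
Qed.

Definition level (t : nat) : {set V} := [set v | (t <= deg ends v)%nat].

(* Under a biased orientation, an edge meeting L_t has its head in L_t,
   so the in-degree distribution saturates the constraint of P(G) at L_t. *)
Lemma biased_level_tight (o : E -> bool) (t : nat) :
  biased ends o ->
  pS (indeg_dist ends o) (level t) = frac_edges ends (level t).
Proof.
move=> bias; rewrite pS_indeg_dist /frac_edges.
suff -> : [set e | Defs.head ends o e \in level t] =
  [set e | ((ends e).1 \in level t) || ((ends e).2 \in level t)] by [].
apply/setP => e; rewrite /level !inE; have [to1 to2] := bias e.
case le1: (t <= deg ends (ends e).1)%nat; case le2: (t <= deg ends (ends e).2)%nat => /=.
- by rewrite /Defs.head; case: (o e); rewrite ?le1 ?le2.
- by rewrite to1 ?le1 //; apply: leq_trans le1; rewrite ltnNge le2.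
- by rewrite to2 ?le2 //; apply: leq_trans le2; rewrite ltnNge le1.
- by rewrite /Defs.head; case: (o e); rewrite ?le1 ?le2.
Qed.

Definition log_gap (k : nat) : R :=
  log2 (INR k.+2 / m) - log2 (INR k.+1 / m).

Lemma log_gap_ge0 (k : nat) : (0 < nedges E)%nat -> 0 <= log_gap k.
Proof.
move=> /nedges_gt0 m_gt0; rewrite /log_gap.
suff : log2 (INR k.+1 / m) <= log2 (INR k.+2 / m) by lra.
apply: log2_le; first by apply: Rdiv_lt_0_compat => //; apply: lt_0_INR; lia.
apply: Rmult_le_compat_r; first by apply/Rlt_le/Rinv_0_lt_compat.
by apply: le_INR; lia.
Qed.

(* The LP objective with degrees truncated at n+1; the layer-cake formula
   is proved by peeling off one level set at a time. *)
Definition trunc_obj (n : nat) (q : V -> R) : R :=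
  \rsum_(v : V) - (q v * log2 (INR (minn (deg ends v) n.+1) / m)).

Lemma trunc_obj0 (q : V -> R) :
  (forall v, (0 < deg ends v)%nat) -> pS q [set: V] = 1 ->
  trunc_obj 0 q = - log2 (1 / m).
Proof.
move=> deg_gt0 q1; rewrite /trunc_obj.
have := @rsum_lin _ predT q q (- log2 (1 / m)) 0.
have -> : \rsum_(v : V) q v = 1 by rewrite -q1; apply: eq_bigl => v; rewrite inE.
have -> : - log2 (1 / m) * 1 + 0 * 1 = - log2 (1 / m) by ring.
move <-; apply: eq_bigr => v _; rewrite (minn_idPr (deg_gt0 v)) /=; ring.
Qed.

(* Raising the truncation from n+1 to n+2 changes only the vertices of
   L_(n+2), each by the gap log_gap n. *)
Lemma trunc_objS (n : nat) (q : V -> R) :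
  trunc_obj n.+1 q = trunc_obj n q - log_gap n * pS q (level n.+2).
Proof.
rewrite /trunc_obj /pS [\rsum_(v in _) _]big_mkcond.
have -> : forall a b, a - log_gap n * b = 1 * a + - log_gap n * b by move=> *; ring.
rewrite -rsum_lin; apply: eq_bigr => v _; rewrite /level inE.
case: (ltnP n.+1 (deg ends v)) => [deg_big | deg_small].
- by rewrite (minn_idPr deg_big) /log_gap; ring.
- by rewrite (minn_idPl (leq_trans deg_small (leqnSn _))); ring.
Qed.

(* Degrees never exceed m, so truncation at m+1 is the LP objective itself. *)
Lemma trunc_obj_full (q : V -> R) : trunc_obj (nedges E) q = lp_obj ends q.
Proof.
apply: eq_bigr => v _; congr (- (_ * log2 (INR _ / _))).
by apply/minn_idPl/(leq_trans (max_card _))/leqnSn.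
Qed.

Lemma layer_cake (q : V -> R) :
  (forall v, (0 < deg ends v)%nat) -> pS q [set: V] = 1 ->
  lp_obj ends q =
  - log2 (1 / m) - \rsum_(k : 'I_(nedges E)) log_gap k * pS q (level k.+2).
Proof.
move=> deg_gt0 q1; rewrite -trunc_obj_full.
have layers n : trunc_obj n q =
    - log2 (1 / m) - \rsum_(k : 'I_n) log_gap k * pS q (level k.+2).
  elim: n => [|n IH]; first by rewrite trunc_obj0 // big_ord0; ring.
  by rewrite trunc_objS big_ord_recr IH /=; ring.
exact: layers.
Qed.

Lemma biased_lp_optimal (o : E -> bool) (q : V -> R) :
  (0 < nedges E)%nat -> (forall v, (0 < deg ends v)%nat) ->
  biased ends o -> inP ends q ->
  lp_obj ends (indeg_dist ends o) <= lp_obj ends q.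
Proof.
move=> m_gt0 deg_gt0 bias [qP q1].
have [_ p1] := indeg_dist_inP o m_gt0.
rewrite !layer_cake //; apply: Rplus_le_compat_l; apply: Ropp_le_contravar.
apply: rsum_le => k _; apply: Rmult_le_compat_l; first exact: log_gap_ge0.
by rewrite biased_level_tight.
Qed.

Lemma lp_obj_le_entropy (q : V -> R) :
  (forall v, 0 <= q v <= INR (deg ends v) / m) -> lp_obj ends q <= entropy q.
Proof.
move=> q_bnd; apply: rsum_le => v _; rewrite /negxlogx.
case: (Req_EM_T (q v) 0) => [q0 | q_ne0] /=; first by rewrite q0; lra.
have [q_ge0 q_le] := q_bnd v.
have q_gt0 : 0 < q v by case: q_ge0 => // /esym.
have := Rmult_le_compat_l _ _ _ q_ge0 (log2_le q_gt0 q_le); lra.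
Qed.

Lemma indeg_dist_bounds (o : E -> bool) (v : V) :
  (0 < nedges E)%nat ->
  0 <= indeg_dist ends o v <= INR (deg ends v) / m.
Proof.
move=> /nedges_gt0 m_gt0; have minv_ge0 : 0 <= / m by apply/Rlt_le/Rinv_0_lt_compat.
split; first by apply: Rmult_le_pos => //; apply: pos_INR.
apply: Rmult_le_compat_r => //; apply/le_INR/leP/subset_leq_card/subsetP => e.
by rewrite !inE /Defs.head /incident; case: (o e) => /eqP ->; rewrite eqxx ?orbT.
Qed.

End Graph.

Lemma OPT_lower_bound (V E : finType) (ends : E -> V * V) (x : R) :
  (forall o : E -> bool, x <= entropy (indeg_dist ends o)) -> x <= OPT ends.
Proof. by move=> x_le; apply: (big_ind (Rle x)) => // a b; apply: Rmin_glb. Qed.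

Theorem mainTheorem7 (V E : finType) (ends : E -> V * V)
  (Hloop : loopless ends)
  (Hm : leq 1%nat (nedges E))
  (Hnoiso : forall v : V, ltn 0%nat (deg ends v))
  (o : E -> bool) (Hb : biased ends o) :
  inP ends (indeg_dist ends o) /\
  (forall q : V -> R, inP ends q -> lp_obj ends (indeg_dist ends o) <= lp_obj ends q) /\
  lp_obj ends (indeg_dist ends o) <= OPT ends.
Proof.
split; first exact: indeg_dist_inP.
split=> [q qP | ]; first exact: biased_lp_optimal.
apply: OPT_lower_bound => o'.
apply: Rle_trans (lp_obj_le_entropy (fun v => @indeg_dist_bounds _ _ ends o' v Hm)).
exact: biased_lp_optimal Hm Hnoiso Hb (indeg_dist_inP ends o' Hm).
Qed.
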